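(* Let $G=(V,E)$ be an unweighted graph with $n$ vertices, and let $e\in E$. Then $$ B_e^{2}\leq n. $$
   Context: $L=D-A$ is the Laplacian of the unweighted graph $G$, $L^{+}$ its Moore–Penrose pseudoinverse, $L^{2+}=(L^+)^2$, and $1_v$ the indicator vector of vertex $v$. The biharmonic distance is $B_{st}=\sqrt{(1_s-1_t)^{T}L^{2+}(1_s-1_t)}$, and $B_e:=B_{st}$ for an edge $e=\{s,t\}$. *)

From mathcomp Require Import all_boot all_order all_algebra.
Set Implicit Arguments. Unset Strict Implicit. Unset Printing Implicit Defensive.
Import Order.TTheory GRing.Theory Num.Theory.
Local Open Scope ring_scope.

Definition simple_graph (n : nat) (adj : rel 'I_n) : Prop :=
  (forall i j, adj i j = adj j i) /\ (forall i, adj i i = false).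

Definition degree (n : nat) (adj : rel 'I_n) (i : 'I_n) : nat :=
  #|[set j | adj i j]|.

Definition laplacian (R : ringType) (n : nat) (adj : rel 'I_n) : 'M[R]_n :=
  \matrix_(i, j) ((if i == j then (degree adj i)%:R else 0)
                  - (if adj i j then 1 else 0)).

(* X is the Moore–Penrose pseudoinverse of A (the four Penrose equations;
   over a real field the conjugate transpose is the transpose). *)
Definition is_MP_pinv (R : ringType) (n : nat) (A X : 'M[R]_n) : Prop :=
  [/\ A *m X *m A = A, X *m A *m X = X,
      (A *m X)^T = A *m X & (X *m A)^T = X *m A].

Definition ind (R : ringType) (n : nat) (v : 'I_n) : 'cV[R]_n :=
  \col_i (if i == v then 1 else 0).

Definition biharm_sq (R : ringType) (n : nat) (Lp : 'M[R]_n) (s t : 'I_n) : R :=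
  let b := ind R s - ind R t in
  ((b^T *m (Lp *m Lp) *m b) 0 0).

(* x := L^+ (1_s - 1_t) is the electrical potential of a unit current from s
   to t, so that B_st^2 = |x|^2. It solves L x = 1_s - 1_t (1_s - 1_t is
   orthogonal to ker L because s and t are adjacent) and is orthogonal to
   ker L. By the maximum principle every x_v lies between x_t <= 0 and
   x_s >= 0, while x_s - x_t, the effective resistance of the edge st, is at
   most 1. Hence |x_v| <= 1 for every vertex v. *)

From mathcomp Require Import all_boot all_order all_algebra.
From mathcomp Require Import ring lra.
Import Order.TTheory GRing.Theory Num.Theory.
Set Implicit Arguments. Unset Strict Implicit. Unset Printing Implicit Defensive.
Local Open Scope ring_scope.

Definition dotmx (R : pzRingType) n (u v : 'cV[R]_n) : R := (u^T *m v) 0 0.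

Section DotProduct.
Variables (R : realFieldType) (n : nat).
Implicit Types (u v w : 'cV[R]_n) (A : 'M[R]_n).

Lemma dotmxE u v : dotmx u v = \sum_i u i 0 * v i 0.
Proof. by rewrite /dotmx mxE; apply: eq_bigr => i _; rewrite mxE. Qed.

Lemma dotmx0r u : dotmx u 0 = 0.
Proof. by rewrite /dotmx mulmx0 mxE. Qed.

Lemma dotmxBr u v w : dotmx u (v - w) = dotmx u v - dotmx u w.
Proof.
by rewrite !dotmxE -sumrB; apply: eq_bigr => i _; rewrite !mxE mulrBr.
Qed.

Lemma dotmx0l v : dotmx 0 v = 0.
Proof. by rewrite /dotmx trmx0 mul0mx mxE. Qed.

Lemma dotmx_mulmxr u A v : dotmx u (A *m v) = dotmx (A^T *m u) v.
Proof. by rewrite /dotmx trmx_mul trmxK mulmxA. Qed.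

Lemma dotmx_self_eq0 v : dotmx v v = 0 -> v = 0.
Proof.
rewrite dotmxE => v0; apply/matrixP => i k; rewrite ord1 mxE.
have sq_ge0 j : true -> 0 <= v j 0 * v j 0 by rewrite -expr2 sqr_ge0.
by have /eqP := @psumr_eq0P _ _ _ _ sq_ge0 v0 i isT; rewrite mulf_eq0 orbb => /eqP.
Qed.

Lemma dotmx_ind_sub w s t : dotmx w (ind R s - ind R t) = w s 0 - w t 0.
Proof.
have dot_ind (k : 'I_n) : dotmx w (ind R k) = w k 0.
  rewrite dotmxE (bigD1 k) //= !mxE eqxx mulr1 big1 ?addr0 // => i /negbTE ik.
  by rewrite !mxE ik mulr0.
by rewrite dotmxBr !dot_ind.
Qed.

End DotProduct.

Section PseudoInverse.
Variables (R : comNzRingType) (n : nat).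
Implicit Types A X Y : 'M[R]_n.

Lemma pinv_unique A X Y : is_MP_pinv A X -> is_MP_pinv A Y -> X = Y.
Proof.
case=> [X1 X2 X3 X4] [Y1 Y2 Y3 Y4].
have AXY : A *m X = A *m X *m (A *m Y).
  by rewrite -{1}X3 -{1}Y1 -mulmxA trmx_mul X3 Y3.
have YAX : Y *m A = X *m A *m (Y *m A).
  by rewrite -{1}Y4 -{1}X1 !mulmxA -(mulmxA (Y *m A)) trmx_mul X4 Y4 mulmxA.
have -> : X = X *m A *m Y by rewrite -{1}X2 -mulmxA AXY !mulmxA X2.
by rewrite -[RHS]Y2 YAX -!mulmxA (mulmxA Y A Y) Y2.
Qed.

Lemma pinv_sym A X : A^T = A -> is_MP_pinv A X -> X^T = X.
Proof.
move=> AT AX; apply/esym/(pinv_unique AX); case: AX => [X1 X2 X3 X4]; split.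
- by apply: trmx_inj; rewrite !trmx_mul trmxK AT mulmxA X1.
- by apply: trmx_inj; rewrite !trmx_mul !trmxK AT mulmxA X2.
- by rewrite trmx_mul trmxK AT -X4 trmx_mul AT.
- by rewrite trmx_mul trmxK AT -X3 trmx_mul AT.
Qed.

Lemma mul_trmx_pinv A X : is_MP_pinv A X -> A^T *m A *m X = A^T.
Proof. by case=> [X1 _ X3 _]; rewrite -mulmxA -X3 -trmx_mul X1. Qed.

End PseudoInverse.

Section PseudoInverseRange.
Variables (R : realFieldType) (n : nat).
Implicit Types (A X : 'M[R]_n) (b w y : 'cV[R]_n).

Lemma pinv_ker_orth A X w y :
  is_MP_pinv A X -> A *m w = 0 -> dotmx w (X *m y) = 0.
Proof.
case=> [_ X2 _ X4] Aw0.
by rewrite -X2 -(mulmxA (X *m A)) dotmx_mulmxr X4 -mulmxA Aw0 mulmx0 dotmx0l.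
Qed.

Lemma pinv_range A X b :
  is_MP_pinv A X -> (forall w, A^T *m w = 0 -> dotmx w b = 0) ->
  A *m (X *m b) = b.
Proof.
move=> AX b_perp; set v := b - A *m (X *m b).
have Atv0 : A^T *m v = 0 by rewrite mulmxBr !mulmxA mul_trmx_pinv // subrr.
apply/eqP; rewrite eq_sym -subr_eq0 -/v; apply/eqP/dotmx_self_eq0.
by rewrite {2}/v dotmxBr dotmx_mulmxr Atv0 dotmx0l b_perp // subr0.
Qed.

End PseudoInverseRange.

Lemma sumr_pair_le (R : realFieldType) (I : finType) (F : I -> I -> R) i j :
  i != j -> (forall k l, 0 <= F k l) -> F i j + F j i <= \sum_k \sum_l F k l.
Proof.
move=> ij F_ge0; rewrite pair_bigA (bigD1 (i, j)) //= (bigD1 (j, i)) /=; last first.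
  by rewrite xpair_eqE eq_sym andbb.
by rewrite addrA lerDl sumr_ge0.
Qed.

Lemma truncate_firmly_nonexpansive (R : realFieldType) (a : R) :
  let f p := if p < a then p - a else 0 in
  forall p q, (f p - f q) ^+ 2 <= (f p - f q) * (p - q).
Proof. by move=> f p q; rewrite /f; case: ltrP => hp; case: ltrP => hq; nra. Qed.

Section Laplacian.
Variables (R : realFieldType) (n : nat) (adj : rel 'I_n).
Local Notation L := (laplacian R adj).
Implicit Types (w x y z : 'cV[R]_n).

Definition dirichlet y z : R :=
  \sum_i \sum_j (if adj i j then (y i 0 - y j 0) * (z i 0 - z j 0) else 0).

Lemma laplacian_mulmx z i :
  (L *m z) i 0 = \sum_j (if adj i j then z i 0 - z j 0 else 0).
Proof.
rewrite mxE; under eq_bigr do rewrite mxE mulrBl.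
rewrite sumrB (bigD1 i) //= eqxx big1 => [|j /negbTE]; last first.
  by rewrite eq_sym => ->; rewrite mul0r.
have -> : (degree adj i)%:R * z i 0 = \sum_(j | adj i j) z i 0.
  by rewrite sumr_const mulr_natl; congr (_ *+ _); apply: eq_card => j; rewrite inE.
rewrite addr0 -big_mkcond sumrB; congr (_ - _); rewrite [RHS]big_mkcond.
by apply: eq_bigr => j _; case: adj; rewrite ?mul1r ?mul0r.
Qed.

Lemma dirichlet_le0_edges w :
  dirichlet w w <= 0 -> forall i j, adj i j -> w i 0 = w j 0.
Proof.
move=> w_le0 i j ij.
pose F k l := if adj k l then (w k 0 - w l 0) * (w k 0 - w l 0) else 0.
have F_ge0 k l : 0 <= F k l by rewrite /F; case: adj => //; rewrite -expr2 sqr_ge0.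
have row_ge0 k : true -> 0 <= \sum_l F k l by move=> _; apply: sumr_ge0.
have F0 : dirichlet w w = 0 by apply/eqP; rewrite eq_le w_le0 sumr_ge0.
have /eqP := @psumr_eq0P _ _ _ _ (fun l _ => F_ge0 i l)
  (@psumr_eq0P _ _ _ _ row_ge0 F0 i isT) j isT.
by rewrite /F ij mulf_eq0 orbb subr_eq0 => /eqP.
Qed.

Lemma dirichlet_map_le (f : R -> R) x :
  (forall p q, (f p - f q) ^+ 2 <= (f p - f q) * (p - q)) ->
  dirichlet (map_mx f x) (map_mx f x) <= dirichlet (map_mx f x) x.
Proof.
move=> f_firm; apply: ler_sum => i _; apply: ler_sum => j _.
by case: adj => //; rewrite !mxE -expr2.
Qed.

Hypothesis adj_simple : simple_graph adj.

Lemma laplacian_tr : L^T = L.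
Proof.
case: adj_simple => adjC _; apply/matrixP => i j; rewrite !mxE eq_sym adjC.
by case: eqP => [->|].
Qed.

Lemma dirichletE y z : dotmx y (L *m z) *+ 2 = dirichlet y z.
Proof.
case: adj_simple => adjC _.
have yLz_rows : dotmx y (L *m z) =
    \sum_i \sum_j (if adj i j then y i 0 * (z i 0 - z j 0) else 0).
  rewrite dotmxE; apply: eq_bigr => i _; rewrite laplacian_mulmx mulr_sumr.
  by apply: eq_bigr => j _; case: adj; rewrite ?mulr0.
have yLz_cols : dotmx y (L *m z) =
    \sum_i \sum_j (if adj i j then y j 0 * (z j 0 - z i 0) else 0).
  rewrite yLz_rows exchange_big /=; apply: eq_bigr => i _; apply: eq_bigr => j _.
  by rewrite adjC.
rewrite mulr2n {1}yLz_rows yLz_cols -big_split; apply: eq_bigr => i _ /=.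
rewrite -big_split; apply: eq_bigr => j _ /=.
by case: adj; rewrite ?addr0 //; ring.
Qed.

Lemma laplacian_kerP w : L *m w = 0 <-> forall i j, adj i j -> w i 0 = w j 0.
Proof.
split=> [Lw0|w_edges].
  by apply: dirichlet_le0_edges; rewrite -dirichletE Lw0 dotmx0r mul0rn.
apply/matrixP => i k; rewrite ord1 laplacian_mulmx mxE big1 // => j _.
by case: ifP => // /w_edges ->; rewrite subrr.
Qed.

End Laplacian.

Section EdgePotential.
Variables (R : realFieldType) (n : nat) (adj : rel 'I_n).
Hypothesis adj_simple : simple_graph adj.
Local Notation L := (laplacian R adj).
Implicit Types (x : 'cV[R]_n) (s t : 'I_n).

(* [x s 0 - x t 0] is the effective resistance of the edge; the edge alone
   contributes twice its square to the energy, which is twice the resistance. *)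
Lemma edge_potential_drop_le1 s t x :
  adj s t -> L *m x = ind R s - ind R t -> x s 0 - x t 0 <= 1.
Proof.
move=> st Lx; case: (adj_simple) => adjC adj_irr.
have ts : s != t by apply: contraTneq st => ->; rewrite adj_irr.
have energy : dirichlet adj x x = (x s 0 - x t 0) *+ 2.
  by rewrite -dirichletE // Lx dotmx_ind_sub.
have term_ge0 k l : 0 <= if adj k l then (x k 0 - x l 0) * (x k 0 - x l 0) else 0.
  by case: adj => //; rewrite -expr2 sqr_ge0.
have := sumr_pair_le ts term_ge0.
by rewrite -/(dirichlet adj x x) energy st adjC st mulr2n => ?; nra.
Qed.

(* Truncating [x] below its value at the sink does not
   increase the Dirichlet energy and pairs nonpositively with [L x], so the
   truncation has zero energy, and every function of it lies in [ker L].
   Orthogonality of [x] to these vectors rules out values below [x t 0]. *)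
Lemma potential_sink_min s t x :
    L *m x = ind R s - ind R t -> (forall w, L *m w = 0 -> dotmx w x = 0) ->
  x t 0 <= 0 /\ forall v, x t 0 <= x v 0.
Proof.
move=> Lx x_perp; set a := x t 0.
pose w := map_mx (fun p => if p < a then p - a else 0) x.
have wE v : w v 0 = if x v 0 < a then x v 0 - a else 0 by rewrite mxE.
have w_edges : forall i j, adj i j -> w i 0 = w j 0.
  apply: dirichlet_le0_edges; apply: le_trans (dirichlet_map_le _ _ _) _.
    exact: truncate_firmly_nonexpansive.
  rewrite -dirichletE // Lx dotmx_ind_sub !wE ltxx subr0.
  by case: ifP => [/ltW xs_le|_]; rewrite ?mul0rn // pmulrn_lle0 // subr_le0.
clearbody w.
have level_sum (g : R -> R) : \sum_v g (w v 0) * x v 0 = 0.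
  rewrite -[RHS](x_perp (map_mx g w)); last first.
    by apply/(laplacian_kerP adj_simple) => i j /w_edges wij; rewrite !mxE wij.
  by rewrite dotmxE; apply: eq_bigr => v _; rewrite mxE.
have a_le0 : a <= 0.
  rewrite leNgt; apply/negP => a_gt0.
  have term_ge0 v : true -> 0 <= (w v 0 == 0)%:R * x v 0.
    move=> _; rewrite wE; case: ltrP => [xv_lt|a_le].
      by rewrite subr_eq0 (lt_eqF xv_lt) mul0r.
    by rewrite eqxx mul1r (le_trans (ltW a_gt0)).
  have := @psumr_eq0P _ _ _ _ term_ge0 (level_sum (fun r => (r == 0)%:R)) t isT.
  by rewrite wE ltxx eqxx mul1r => a0; move: a_gt0; rewrite /a a0 ltxx.
split=> // v; rewrite leNgt; apply/negP => xv_lt.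
have term_ge0 u : true -> 0 <= w u 0 * x u 0.
  by move=> _; rewrite wE; case: ltrP => [xu_lt|_]; [nra | rewrite mul0r].
have := @psumr_eq0P _ _ _ _ term_ge0 (level_sum id) v isT.
rewrite wE xv_lt; nra.
Qed.

Lemma laplacian_pinv_edge Lp s t :
    is_MP_pinv L Lp -> adj s t ->
  L *m (Lp *m (ind R s - ind R t)) = ind R s - ind R t.
Proof.
move=> LpP st; apply: (pinv_range LpP) => w.
rewrite laplacian_tr // => /(laplacian_kerP adj_simple) w_edges.
by rewrite dotmx_ind_sub (w_edges s t st) subrr.
Qed.

Lemma edge_potential_bounded Lp s t v :
    is_MP_pinv L Lp -> adj s t -> -1 <= (Lp *m (ind R s - ind R t)) v 0 <= 1.
Proof.
move=> LpP st; have ts : adj t s by case: adj_simple => adjC _; rewrite adjC.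
have [xt_le0 /(_ v) xt_le] :=
  potential_sink_min (laplacian_pinv_edge LpP st) (fun w => pinv_ker_orth _ LpP).
have [] :=
  potential_sink_min (laplacian_pinv_edge LpP ts) (fun w => pinv_ker_orth _ LpP).
have drop_le1 := edge_potential_drop_le1 st (laplacian_pinv_edge LpP st).
(* the potential of the reversed edge is [- x] *)
rewrite -opprB mulmxN => ys_le0 /(_ v) ys_le.
move: (Lp *m _) xt_le0 xt_le ys_le0 ys_le drop_le1 => x; rewrite !mxE.
lra.
Qed.

End EdgePotential.

Theorem theoremA3 (R : realFieldType) (n : nat) (adj : rel 'I_n)
  (Lp : 'M[R]_n) (s t : 'I_n) :
  simple_graph adj ->
  is_MP_pinv (laplacian R adj) Lp ->
  adj s t ->
  biharm_sq Lp s t <= n%:R.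
Proof.
move=> adj_simple LpP st.
have LpT : Lp^T = Lp := pinv_sym (laplacian_tr R adj_simple) LpP.
have -> : biharm_sq Lp s t =
    dotmx (Lp *m (ind R s - ind R t)) (Lp *m (ind R s - ind R t)).
  by rewrite /biharm_sq /dotmx trmx_mul LpT !mulmxA.
rewrite dotmxE -[n in n%:R]card_ord -sumr_const; apply: ler_sum => v _.
have /andP[x_ge x_le] := edge_potential_bounded adj_simple v LpP st.
nra.
Qed.
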